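(* Let $M$ be an $m\times n$ $0/1$-matrix and let $B$ be a block of $M$ of size $r\times c$. Given the data structure $\Phi(B)$, and given the set of entries of the input boundary $B^-$ that are reachable from $(1,1)$, one can determine in $O(r+c)$ time the set of entries of the output boundary $B^+$ that are reachable from $(1,1)$.
   Context: Entries of $M$ are indexed $(a,b)$, rows increasing from bottom to top, columns left to right. A path from $(k,l)$ to $(i,j)$ is a sequence of $1$-entries starting at $(k,l)$ and ending at $(i,j)$ in which each step goes from $(a,b)$ to $(a+1,b)$, $(a,b+1)$ or $(a+1,b+1)$; $(i,j)$ is reachable from $(k,l)$ if such a path exists. A block $B$ is the submatrix formed by rows $r^-\le a\le r^+$ and columns $s^-\le b\le s^+$. Its input boundary $B^-$ consists of the entries in row $r^-$ or column $s^-$ of $B$, ordered: first row $r^-$ from column $s^+$ down to $s^-$, then the remaining entries of column $s^-$ from row $r^-+1$ up to $r^+$. Its output boundary $B^+$ consists of the entries in row $r^+$ or column $s^+$ of $B$, ordered: first column $s^+$ from row $r^-$ up to $r^+$, then the remaining entries of row $r^+$ from column $s^+-1$ down to $s^-$. The data structure $\Phi(B)$ stores: (1) for each $1$-entry $i$ of $B^-$, the first entry $\sigma_A(i)$ and the last entry $\sigma_Z(i)$ of $B^+$ (in output-boundary order) that are reachable from $i$; (2) for each $1$-entry $j$ of $B^+$, a flag $f(j)$ indicating whether $j$ is reachable from some entry of $B^-$, a list $L_A(j)$ of the $1$-entries $i\in B^-$ with $\sigma_A(i)=j$, and a list $L_Z(j)$ of the $1$-entries $i\in B^-$ with $\sigma_Z(i)=j$.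 Running time is measured in the RAM model with constant-time access to these stored items. *)

From mathcomp Require Import all_boot all_algebra.
Set Implicit Arguments. Unset Strict Implicit. Unset Printing Implicit Defensive.

(* Matrices, entries, reachability (0-based: paper entry (a,b) is our  *)
(* (a-1,b-1); row 0 is the bottom row, column 0 the leftmost).         *)

Section Reach.
Variables (m n : nat) (M : 'M[bool]_(m, n)).

(* value of the entry at nat coordinates; false outside the matrix *)
Definition one (x : nat * nat) : bool :=
  match @insub nat (fun i => i < m) _ x.1, @insub nat (fun j => j < n) _ x.2 with
  | Some i, Some j => M i j
  | _, _ => false
  end.

Definition stepRel : rel (nat * nat) := fun x y =>
  [|| (y.1 == x.1.+1) && (y.2 == x.2),
      (y.1 == x.1) && (y.2 == x.2.+1)
    | (y.1 == x.1.+1) && (y.2 == x.2.+1)].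

Definition reach (x y : nat * nat) : Prop :=
  exists s : seq (nat * nat),
    [/\ path stepRel x s, last x s = y & all one (x :: s)].

End Reach.

(* Blocks and their boundaries.  The block has rows rm..rp, columns    *)
(* sm..sp (0-based); r = rp - rm + 1, c = sp - sm + 1.  Both boundaries *)
(* have r + c - 1 entries, indexed 0 .. r+c-2 in the paper's order.     *)

Definition brows (rm rp : nat) := (rp - rm).+1.
Definition bcols (sm sp : nat) := (sp - sm).+1.
Definition blen (rm rp sm sp : nat) := (brows rm rp + bcols sm sp).-1.

Definition inpos (rm rp sm sp k : nat) : nat * nat :=
  if k < bcols sm sp then (rm, sp - k) else (rm + (k - bcols sm sp).+1, sm).

Definition outpos (rm rp sm sp k : nat) : nat * nat :=
  if k < brows rm rp then (rm + k, sp) else (rp, sp - (k - brows rm rp).+1).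

Section Phi.
Variables (m n : nat) (M : 'M[bool]_(m, n)) (rm rp sm sp : nat).
Let p := blen rm rp sm sp.
Let I k := inpos rm rp sm sp k.
Let O k := outpos rm rp sm sp k.

Definition is_sigmaA (i j : nat) : Prop :=
  [/\ j < p, reach M (I i) (O j) & forall j', j' < j -> ~ reach M (I i) (O j')].

Definition is_sigmaZ (i j : nat) : Prop :=
  [/\ j < p, reach M (I i) (O j) &
     forall j', j < j' -> j' < p -> ~ reach M (I i) (O j')].

Definition fflag (j : nat) : Prop := exists2 i, i < p & reach M (I i) (O j).

End Phi.

Inductive instr : Type :=
| IConst of nat & nat
| IAdd of nat & nat & nat
| ISub of nat & nat & nat    (* ISub d a b   : R[d] := R[a] - R[b] (trunc)*)
| ILoad of nat & nat
| IStore of nat & nat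
| IJz of nat & nat
| IHalt.

Definition program := seq instr.

Record config := Config { cpc : nat; cregs : nat -> nat; cmem : nat -> nat }.

Definition upd (f : nat -> nat) (a v : nat) : nat -> nat :=
  fun x => if x == a then v else f x.

(* one step; a halted configuration (pc on IHalt or outside the program)
   is left unchanged *)
Definition ram_step (P : program) (s : config) : config :=
  let R := cregs s in let Mm := cmem s in let q := cpc s in
  match nth IHalt P q with
  | IConst d k => Config q.+1 (upd R d k) Mm
  | IAdd d a b => Config q.+1 (upd R d (R a + R b)) Mm
  | ISub d a b => Config q.+1 (upd R d (R a - R b)) Mm
  | ILoad d a => Config q.+1 (upd R d (Mm (R a))) Mm
  | IStore a x => Config q.+1 R (upd Mm (R a) (R x))
  | IJz x t => Config (if R x == 0 then t else q.+1) R Mm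
  | IHalt => s
  end.

Definition halted (P : program) (s : config) : bool :=
  if nth IHalt P (cpc s) is IHalt then true else false.

Definition init (Mm : nat -> nat) : config := Config 0 (fun _ => 0) Mm.

Definition encb (v : nat) (P : Prop) : Prop := (v = 1 /\ P) \/ (v = 0 /\ ~ P).

Definition enco (v : nat) (Q : nat -> Prop) (p : nat) : Prop :=
  (exists2 j, v = j.+1 & Q j) \/ (v = 0 /\ forall j, j < p -> ~ Q j).

Definition memlist (Mm : nat -> nat) (ptr len : nat) : seq nat :=
  [seq Mm (ptr + t) | t <- iota 0 len].

(* Layout:
   Mm 0 = r, Mm 1 = c, Mm 2 = IN, Mm 3 = OUT, Mm 4 = FREE.
   Input entry k (0 <= k < r+c-1), record at IN + 4k:
     [is-1-entry ; sigma_A(k)+1 or 0 ; sigma_Z(k)+1 or 0 ;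
      reachable-from-(1,1) bit ].
   Output entry j, record at OUT + 6j:
     [is-1-entry ; f(j) ; |L_A(j)| ; ptr to L_A(j) ; |L_Z(j)| ; ptr to L_Z(j)],
   the lists being stored as duplicate-free sequences of input indices. *)
Definition encodes (m n : nat) (M : 'M[bool]_(m, n)) (rm rp sm sp : nat)
    (Mm : nat -> nat) : Prop :=
  let p := blen rm rp sm sp in
  let I := inpos rm rp sm sp in
  let O := outpos rm rp sm sp in
  let IN := Mm 2 in let OUT := Mm 3 in let FREE := Mm 4 in
  [/\ Mm 0 = brows rm rp /\ Mm 1 = bcols sm sp,
      IN + 4 * p <= FREE /\ OUT + 6 * p <= FREE,
      (forall a, FREE <= a -> Mm a = 0),
      (forall k, k < p ->
        [/\ encb (Mm (IN + 4 * k)) (one M (I k)),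
            enco (Mm (IN + 4 * k + 1)) (is_sigmaA M rm rp sm sp k) p,
            enco (Mm (IN + 4 * k + 2)) (is_sigmaZ M rm rp sm sp k) p &
            encb (Mm (IN + 4 * k + 3)) (reach M (0, 0) (I k))]) &
      (forall j, j < p ->
        let lenA := Mm (OUT + 6 * j + 2) in let ptrA := Mm (OUT + 6 * j + 3) in
        let lenZ := Mm (OUT + 6 * j + 4) in let ptrZ := Mm (OUT + 6 * j + 5) in
        [/\ encb (Mm (OUT + 6 * j)) (one M (O j)),
            encb (Mm (OUT + 6 * j + 1)) (fflag M rm rp sm sp j),
            ptrA + lenA <= FREE /\ ptrZ + lenZ <= FREE,
            uniq (memlist Mm ptrA lenA) /\ uniq (memlist Mm ptrZ lenZ) &
            (forall i, i \in memlist Mm ptrA lenA <->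
                 (i < p /\ is_sigmaA M rm rp sm sp i j)) /\
            (forall i, i \in memlist Mm ptrZ lenZ <->
                 (i < p /\ is_sigmaZ M rm rp sm sp i j))])].

Definition output_ok (m n : nat) (M : 'M[bool]_(m, n)) (rm rp sm sp FREE : nat)
    (Mm : nat -> nat) : Prop :=
  forall j, j < blen rm rp sm sp ->
    encb (Mm (FREE + j)) (reach M (0, 0) (outpos rm rp sm sp j)).

From Pilot Require Import Defs.
From mathcomp Require Import all_boot all_algebra.
From mathcomp Require Import zify.
From Stdlib Require Import Classical.
Set Implicit Arguments. Unset Strict Implicit. Unset Printing Implicit Defensive.

(* A path from (1,1) into B enters it through an input entry.  Monotone paths in the
   grid cross: if an input entry i reaches sigma_A(i) and sigma_Z(i), and some input
   entry i' reaches an output entry j between them, then the path from i' to j meets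
   the path from i to sigma_Z(i) (if i' comes after i on B^-) or the one from i to
   sigma_A(i) (otherwise), so i reaches j.  Hence j is reachable from (1,1) iff f(j)
   holds and j lies in the interval [sigma_A(i), sigma_Z(i)] of some input entry i
   reachable from (1,1).  The program bucket-sorts these intervals by left end, keeping
   the largest right end of each bucket, and then sweeps B^+ maintaining the running
   maximum of right ends; both passes take O(r + c) steps. *)

(** * Monotone paths *)


Lemma stepRel_bounds (x y : nat * nat) : stepRel x y ->
  [/\ x.1 <= y.1, y.1 <= x.1.+1, x.2 <= y.2 & y.2 <= x.2.+1].
Proof. by case/or3P=> /andP[/eqP-> /eqP->]; split; lia. Qed.

Lemma path_last_ge x s : path stepRel x s -> x.1 <= (last x s).1 /\ x.2 <= (last x s).2.
Proof.
elim: s x => [|y s IH] x /=; first by [].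
by case/andP=> /stepRel_bounds[? _ ? _] /IH[? ?]; split; lia.
Qed.

Lemma monotone_paths_meet x xs y ys :
  path stepRel x xs -> path stepRel y ys ->
  x.1 <= y.1 -> y.2 <= x.2 ->
  (last y ys).1 <= (last x xs).1 -> (last x xs).2 <= (last y ys).2 ->
  exists2 w, w \in x :: xs & w \in y :: ys.
Proof.
move: {2}(size xs + size ys) (leqnn (size xs + size ys)) => N.
elim: N x y xs ys => [|N IH] x y xs ys hN px py x1y1 y2x2 endx1 endx2.
  move: hN endx1 endx2; case: xs px => // _; case: ys py => // _ _ /=.
  move: x y x1y1 y2x2 => [a b] [c d] /= *.
  by exists (a, b); rewrite !inE // xpair_eqE; apply/andP; split; apply/eqP; lia.
have [<-|neq] := eqVneq x y; first by exists x; rewrite inE eqxx.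
have [y2_lt|x2_le] := ltnP y.2 x.2.
- (* y is strictly left of x, so its path still has to move: advance it *)
  case: ys hN py endx1 endx2 => [|y' ys] /= hN.
    by move=> _ _ ?; have := path_last_ge px; lia.
  case/andP=> /stepRel_bounds[? ? ? ?] py' endx1 endx2.
  have [w wx wy] := IH x y' xs ys ltac:(lia) px py' ltac:(lia) ltac:(lia) endx1 endx2.
  by exists w; rewrite // inE wy orbT.
- (* same column, x strictly below y: advance x *)
  have x1_lt : x.1 < y.1.
    rewrite ltn_neqAle x1y1 andbT; apply: contra_neq neq => e1.
    by move: x y e1 y2x2 x2_le {px py x1y1 endx1 endx2} => [a b] [c d] /= -> *;
      congr (_, _); lia.
  case: xs hN px endx1 endx2 => [|x' xs] /= hN.
    by move=> _ ? _; have := path_last_ge py; lia.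
  case/andP=> /stepRel_bounds[? ? ? ?] px' endx1 endx2.
  have [w wx wy] := IH x' y xs ys ltac:(lia) px' py ltac:(lia) ltac:(lia) endx1 endx2.
  by exists w; rewrite // inE wx orbT.
Qed.

Section Reachability.
Variables (m n : nat) (M : 'M[bool]_(m, n)).

Lemma reach_trans x y z : reach M x y -> reach M y z -> reach M x z.
Proof.
case=> s1 [p1 <- a1] [s2 [p2 <- a2]]; exists (s1 ++ s2); split.
- by rewrite cat_path p1.
- by rewrite last_cat.
- by move: a1 a2; rewrite /= all_cat => /andP[-> ->] /andP[_ ->].
Qed.

Lemma reach_refl x : Defs.one M x -> reach M x x.
Proof. by exists [::]; rewrite /= andbT. Qed.

Lemma reach_through_path x s w : path stepRel x s -> all (Defs.one M) (x :: s) ->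
  w \in x :: s -> reach M x w /\ reach M w (last x s).
Proof.
elim: s x => [|y s IH] x px ax; rewrite in_cons => /predU1P[->|ws] //.
- by split; apply: reach_refl; case/andP: ax.
- by split; [apply: reach_refl; case/andP: ax | exists (y :: s)].
- case/andP: px => xy py; case/andP: ax => ox ays.
  have [yw w_end] := IH y py ays ws; split=> //.
  by apply: reach_trans yw; exists [:: y]; rewrite /= xy ox; case/andP: ays => ->.
Qed.

Lemma reach_crossing x x' y y' : reach M x x' -> reach M y y' ->
  x.1 <= y.1 -> y.2 <= x.2 -> y'.1 <= x'.1 -> x'.2 <= y'.2 ->
  reach M x y' /\ reach M y x'.
Proof.
case=> xs [px <- ax] [ys [py <- ay]] x1y1 y2x2 end1 end2.
have [w wx wy] := monotone_paths_meet px py x1y1 y2x2 end1 end2.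
have [xw wx'] := reach_through_path px ax wx.
have [yw wy'] := reach_through_path py ay wy.
by split; [apply: reach_trans wy' | apply: reach_trans wx'].
Qed.

End Reachability.

Lemma ex_least (P : nat -> Prop) j : P j ->
  exists a, [/\ a <= j, P a & forall b, b < a -> ~ P b].
Proof.
elim: j {-2}j (leqnn j) => [|N IH] j le_jN Pj.
  by exists j; split=> // b; lia.
have [[b [lt_bj Pb]]|no_smaller] := classic (exists b, b < j /\ P b).
  by have [a [? ? ?]] := IH b ltac:(lia) Pb; exists a; split=> //; lia.
by exists j; split=> // b lt_bj Pb; apply: no_smaller; exists b.
Qed.

Lemma ex_greatest_below (P : nat -> Prop) p j : P j -> j < p ->
  exists z, [/\ j <= z, z < p, P z & forall y, z < y -> y < p -> ~ P y].
Proof.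
move=> Pj lt_jp.
have [d [le_d Pd dmin]] := ex_least (P := fun d => P (p.-1 - d)) (j := p.-1 - j)
  ltac:(by rewrite /= subKn //; lia).
exists (p.-1 - d); split=> //; try lia.
move=> y lt_zy lt_yp Py; apply: (dmin (p.-1 - y)); first lia.
by rewrite subKn //; lia.
Qed.

(** * Reachability through a block *)

Section Block.
Variables (rm rp sm sp : nat).
Hypotheses (le_rm_rp : rm <= rp) (le_sm_sp : sm <= sp).
Local Notation p := (blen rm rp sm sp).
Local Notation I := (inpos rm rp sm sp).
Local Notation O := (outpos rm rp sm sp).

Lemma inpos_monotone k k' : k <= k' -> k' < p -> (I k).1 <= (I k').1 /\ (I k').2 <= (I k).2.
Proof. by rewrite /inpos /blen /brows /bcols => *; do 2 case: ifP => ? /=; split; lia. Qed.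

Lemma outpos_monotone j j' : j <= j' -> j' < p -> (O j).1 <= (O j').1 /\ (O j').2 <= (O j).2.
Proof. by rewrite /outpos /blen /brows /bcols => *; do 2 case: ifP => ? /=; split; lia. Qed.

Lemma outpos_in_block j : j < p ->
  [/\ rm <= (O j).1, (O j).1 <= rp, sm <= (O j).2 & (O j).2 <= sp].
Proof. by rewrite /outpos /blen /brows /bcols => *; case: ifP => ? /=; split; lia. Qed.

Definition in_quadrant (w : nat * nat) := (rm <= w.1) && (sm <= w.2).
Definition on_quadrant_border w := in_quadrant w && ((w.1 == rm) || (w.2 == sm)).

Lemma inpos_onto w : on_quadrant_border w -> w.1 <= rp -> w.2 <= sp ->
  exists2 k, k < p & I k = w.
Proof.
case: w => a b; rewrite /on_quadrant_border /in_quadrant /inpos /blen /brows /bcols /=.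
case/andP=> /andP[rm_a sm_b] border a_rp b_sp.
have [a_rm|a_gt] := eqVneq a rm.
  by exists (sp - b); [lia | rewrite ifT; [congr (_, _) |]; lia].
have b_sm : b = sm by move: border; rewrite (negbTE a_gt) => /eqP.
exists (sp - sm + (a - rm)); first lia.
by rewrite ifF; [congr (_, _) |]; lia.
Qed.

Lemma path_enters_quadrant x s : path stepRel x s -> in_quadrant (last x s) ->
  ~~ in_quadrant x || on_quadrant_border x ->
  exists2 w, w \in x :: s & on_quadrant_border w.
Proof.
elim: s x => [|y s IH] x /=.
  by move=> _ ->; rewrite orFb => border; exists x; rewrite ?inE.
case/andP=> /stepRel_bounds[? ? ? ?] py y_end /orP[x_out|]; last first.
  by exists x; rewrite ?inE ?eqxx.
have [w wy w_border] : exists2 w, w \in y :: s & on_quadrant_border w.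
  apply: IH => //; apply/orP; case y_in: (in_quadrant y); [right | by left].
  move: x_out; rewrite /on_quadrant_border y_in; move: y_in; rewrite /in_quadrant.
  by case/andP=> ? ? /nandP[] ?; apply/orP; [left | right]; apply/eqP; lia.
by exists w; rewrite // inE wy orbT.
Qed.

Section BlockReachability.
Variables (m n : nat) (M : 'M[bool]_(m, n)).

Lemma reach_enters_block y : rm <= y.1 <= rp -> sm <= y.2 <= sp -> reach M (0, 0) y ->
  exists2 k, k < p & reach M (0, 0) (I k) /\ reach M (I k) y.
Proof.
move=> /andP[rm_y y_rp] /andP[sm_y y_sp] [s [ps y_end ay]].
have [w ws w_border] : exists2 w, w \in (0, 0) :: s & on_quadrant_border w.
  apply: path_enters_quadrant ps _ _; first by rewrite y_end /in_quadrant rm_y sm_y.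
  by rewrite /on_quadrant_border /in_quadrant /= !leqn0 ![0 == _]eq_sym;
    case: (rm == 0); case: (sm == 0).
have [reach_w w_y] := reach_through_path ps ay ws; rewrite y_end in w_y.
have [w1 w2] : w.1 <= y.1 /\ w.2 <= y.2.
  by case: w_y => t [pt <- _]; apply: path_last_ge.
have [k kp Ik] := inpos_onto w_border (leq_trans w1 y_rp) (leq_trans w2 y_sp).
by exists k; rewrite // Ik.
Qed.

Lemma reach_output_between k i a j z :
  k < p -> i < p -> z < p -> a <= j <= z ->
  reach M (0, 0) (I k) -> reach M (I k) (O a) -> reach M (I k) (O z) ->
  reach M (I i) (O j) -> reach M (0, 0) (O j).
Proof.
move=> kp ip zp /andP[aj jz] reach_k k_a k_z i_j; apply: reach_trans reach_k _.
have [le_ki|lt_ik] := leqP k i.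
- have [? ?] := inpos_monotone le_ki ip; have [? ?] := outpos_monotone jz zp.
  by case: (reach_crossing k_z i_j).
- have [? ?] := inpos_monotone (ltnW lt_ik) kp.
  have [? ?] := outpos_monotone aj (leq_ltn_trans jz zp).
  by case: (reach_crossing i_j k_a).
Qed.

Theorem reach_output_iff j : j < p ->
  reach M (0, 0) (O j) <->
  fflag M rm rp sm sp j /\
  exists k a z, [/\ k < p, reach M (0, 0) (I k), is_sigmaA M rm rp sm sp k a,
                    is_sigmaZ M rm rp sm sp k z & a <= j <= z].
Proof.
move=> jp; split=> [reach_j|[[i ip i_j] [k [a [z [kp reach_k [_ k_a _] [zp k_z _] ajz]]]]]].
- have [? ? ? ?] := outpos_in_block jp.
  have [k kp [reach_k k_j]] := reach_enters_block (y := O j) ltac:(lia) ltac:(lia) reach_j.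
  split; first by exists k.
  pose reached_from_k j' := reach M (I k) (O j').
  have [a [aj k_a amin]] := ex_least (P := reached_from_k) k_j.
  have [z [jz zp k_z zmax]] := ex_greatest_below (P := reached_from_k) k_j jp.
  exists k, a, z; split=> //; last by rewrite aj jz.
  by split=> //; apply: leq_ltn_trans jp.
- exact: reach_output_between kp ip zp ajz reach_k k_a k_z i_j.
Qed.

End BlockReachability.
End Block.

(** * The interval sweep *)

Lemma ltn_bigmax_seq (I : eqType) (r : seq I) (P : pred I) (F : I -> nat) x :
  x < \max_(i <- r | P i) F i <-> exists i, [/\ i \in r, P i & x < F i].
Proof.
rewrite ltnNge; split=> [/bigmax_leqP_seq not_le | [i [ir Pi ltx]]].
  apply: NNPP => no_i; apply: not_le => i ir Pi; rewrite leqNgt.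
  by apply/negP => ltx; apply: no_i; exists i.
by apply/bigmax_leqP_seq => /(_ i ir Pi); rewrite leqNgt ltx.
Qed.

Lemma encbP v P : encb v P -> v != 0 <-> P.
Proof. by case=> [[-> ?] | [-> ?]]. Qed.

Lemma enco_succ v (Q : nat -> Prop) p j :
  enco v Q p -> (forall j1 j2, Q j1 -> Q j2 -> j1 = j2) -> j < p -> v = j.+1 <-> Q j.
Proof.
case=> [[j' -> Qj'] Quniq jp | [-> Qnone] _ jp]; last by split=> // /(Qnone j jp).
by split=> [[<-] // | Qj]; rewrite (Quniq _ _ Qj Qj').
Qed.

Section SigmaUniqueness.
Variables (m n : nat) (M : 'M[bool]_(m, n)) (rm rp sm sp k : nat).

Lemma is_sigmaA_unique a1 a2 :
  is_sigmaA M rm rp sm sp k a1 -> is_sigmaA M rm rp sm sp k a2 -> a1 = a2.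
Proof.
case=> _ k_a1 min1 [_ k_a2 min2].
by have [/min2|/min1|] := ltngtP a1 a2.
Qed.

Lemma is_sigmaZ_unique z1 z2 :
  is_sigmaZ M rm rp sm sp k z1 -> is_sigmaZ M rm rp sm sp k z2 -> z1 = z2.
Proof.
case=> z1p k_z1 max1 [z2p k_z2 max2].
by have [/max1/(_ z2p)|/max2/(_ z1p)|] := ltngtP z1 z2.
Qed.

End SigmaUniqueness.

Section Sweep.
Variable Mm : nat -> nat.

Definition input_reached k := Mm (Mm 2 + 4 * k + 3) != 0.
Definition sigmaA_code k := Mm (Mm 2 + 4 * k + 1).
Definition sigmaZ_code k := Mm (Mm 2 + 4 * k + 2).

(* Sigma codes are shifted by one, 0 meaning "no reachable output entry": bucket a
   holds the intervals with left end a - 1, and only codes a >= 1 enter the running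
   maximum. *)
Definition bucket_max i a :=
  \max_(0 <= k < i | input_reached k && (sigmaA_code k == a)) sigmaZ_code k.

Definition running_max p j := \max_(1 <= a < j.+1) bucket_max p a.

Definition answer p j := (Mm (Mm 3 + 6 * j + 1) != 0) && (j < running_max p j.+1).

Lemma bucket_max0 a : bucket_max 0 a = 0.
Proof. by rewrite /bucket_max big_geq. Qed.

Lemma bucket_maxS i a : bucket_max i.+1 a =
  if input_reached i && (sigmaA_code i == a) then maxn (bucket_max i a) (sigmaZ_code i)
  else bucket_max i a.
Proof. by rewrite /bucket_max big_mkcond big_nat_recr //= -big_mkcond; case: ifP. Qed.

Lemma running_max0 p : running_max p 0 = 0.
Proof. by rewrite /running_max big_geq. Qed.

Lemma running_maxS p j : running_max p j.+1 = maxn (running_max p j) (bucket_max p j.+1).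
Proof. by rewrite /running_max big_nat_recr. Qed.

Lemma answer_spec p j : answer p j <->
  Mm (Mm 3 + 6 * j + 1) != 0 /\
  exists k, [/\ k < p, input_reached k, 0 < sigmaA_code k <= j.+1 & j < sigmaZ_code k].
Proof.
rewrite /answer /running_max; split=> [/andP[-> /ltn_bigmax_seq[a [] ]] | [-> [k [] ]]].
- rewrite mem_index_iota => /andP[a1 aj] _ /ltn_bigmax_seq[k []].
  rewrite mem_index_iota => /andP[_ kp] /andP[reached /eqP codeA] ltZ.
  by split=> //; exists k; rewrite codeA; split=> //; apply/andP.
- move=> kp reached /andP[codeA1 codeAj] ltZ; apply/ltn_bigmax_seq.
  exists (sigmaA_code k); split=> //; first by rewrite mem_index_iota codeA1.
  by apply/ltn_bigmax_seq; exists k; rewrite mem_index_iota reached eqxx.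
Qed.

End Sweep.

Lemma answer_iff m n (M : 'M[bool]_(m, n)) rm rp sm sp Mm j :
  rm <= rp -> sm <= sp -> encodes M rm rp sm sp Mm -> j < blen rm rp sm sp ->
  answer Mm (blen rm rp sm sp) j <-> reach M (0, 0) (outpos rm rp sm sp j).
Proof.
move=> hr hs [_ _ _ hin hout] jp; set p := blen rm rp sm sp in jp hin hout *.
have [_ out_flag _ _ _] := hout j jp.
rewrite answer_spec (reach_output_iff hr hs M jp) -(encbP out_flag).
apply: and_iff_compat_l; split.
- case=> k [kp reached /andP[codeA1 codeAj] ltZ]; have [_ hA hZ hR] := hin k kp.
  case: hA => [[a codeA k_a] | [codeA _]]; last by rewrite /sigmaA_code codeA in codeA1.
  case: hZ => [[z codeZ k_z] | [codeZ _]]; last by rewrite /sigmaZ_code codeZ in ltZ.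
  exists k, a, z; split=> //; first exact/(encbP hR).
  by move: codeAj ltZ; rewrite /sigmaA_code /sigmaZ_code codeA codeZ !ltnS => -> ->.
- case=> k [a [z [kp reach_k k_a k_z /andP[aj jz]]]]; have [_ hA hZ hR] := hin k kp.
  have ap : a < p by case: k_a.
  have zp : z < p by case: k_z.
  exists k; split=> //; first exact/(encbP hR).
  + by rewrite /sigmaA_code (enco_succ hA (@is_sigmaA_unique _ _ M rm rp sm sp k) ap).2.
  + by rewrite /sigmaZ_code (enco_succ hZ (@is_sigmaZ_unique _ _ M rm rp sm sp k) zp).2.
Qed.

(** * The RAM program *)

Lemma iter_invariant (T : Type) (f : T -> T) (Inv : nat -> T -> Prop) c p x :
  (forall i y, i < p -> Inv i y -> exists2 t, t <= c & Inv i.+1 (iter t f y)) ->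
  Inv 0 x -> exists2 t, t <= c * p & Inv p (iter t f x).
Proof.
move=> step Inv0; suff: forall i, i <= p -> exists2 t, t <= c * i & Inv i (iter t f x) by apply.
elim=> [|i IH] ip; first by exists 0; rewrite ?muln0.
have [t1 le_t1 Inv_i] := IH (ltnW ip); have [t2 le_t2 Inv_i1] := step i _ ip Inv_i.
by exists (t2 + t1); [rewrite mulnS; lia | rewrite iterD].
Qed.

(* Constants: R0 = 0, R1 = 1, R2 = p, R3 = IN, R4 = OUT, R5 = FREE,
   R6 = FREE + p, R9 = 4, R10 = 2, R11 = 3, R12 = 6.  R7 is the loop counter, R8 and R20
   point to the current input and output record, R19 holds the running maximum and
   R13-R18, R21 are scratch.  The bucket of left end a lives at FREE + p + a, and
   maxn x y is computed as x + (y - x). *)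
Definition Prog : program :=
 [:: IConst 1 1; IConst 10 2; IConst 11 3; IConst 9 4; IConst 12 6; IConst 13 0;
     ILoad 2 13; ILoad 14 1; IAdd 2 2 14; ISub 2 2 1;
     ILoad 3 10; ILoad 4 11; ILoad 5 9; IAdd 6 5 2; IConst 7 0; IAdd 8 3 0;
 (*16*) ISub 13 2 7; IJz 13 33; IAdd 13 8 11; ILoad 14 13; IJz 14 30;
 (*21*) IAdd 13 8 1; ILoad 15 13; IAdd 13 8 10; ILoad 16 13; IAdd 13 6 15;
 (*26*) ILoad 17 13; ISub 18 16 17; IAdd 18 17 18; IStore 13 18;
 (*30*) IAdd 7 7 1; IAdd 8 8 9; IJz 0 16;
 (*33*) IConst 7 0; IAdd 20 4 0; IConst 19 0;
 (*36*) ISub 13 2 7; IJz 13 53; IAdd 13 6 7; IAdd 13 13 1; ILoad 17 13;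
 (*41*) ISub 18 17 19; IAdd 19 19 18; ISub 21 19 7; IJz 21 50;
 (*45*) IAdd 13 20 1; ILoad 14 13; IJz 14 50; IAdd 13 5 7; IStore 13 1;
 (*50*) IAdd 7 7 1; IAdd 20 20 12; IJz 0 36; IHalt].

Lemma step_const pc R mem d k : nth IHalt Prog pc = IConst d k ->
  ram_step Prog (Config pc R mem) = Config pc.+1 (upd R d k) mem.
Proof. by rewrite /ram_step /= => ->. Qed.

Lemma step_add pc R mem d a b : nth IHalt Prog pc = IAdd d a b ->
  ram_step Prog (Config pc R mem) = Config pc.+1 (upd R d (R a + R b)) mem.
Proof. by rewrite /ram_step /= => ->. Qed.

Lemma step_sub pc R mem d a b : nth IHalt Prog pc = ISub d a b ->
  ram_step Prog (Config pc R mem) = Config pc.+1 (upd R d (R a - R b)) mem.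
Proof. by rewrite /ram_step /= => ->. Qed.

Lemma step_load pc R mem d a : nth IHalt Prog pc = ILoad d a ->
  ram_step Prog (Config pc R mem) = Config pc.+1 (upd R d (mem (R a))) mem.
Proof. by rewrite /ram_step /= => ->. Qed.

Lemma step_store pc R mem a x : nth IHalt Prog pc = IStore a x ->
  ram_step Prog (Config pc R mem) = Config pc.+1 R (upd mem (R a) (R x)).
Proof. by rewrite /ram_step /= => ->. Qed.

Lemma step_jump pc R mem x t : nth IHalt Prog pc = IJz x t -> R x = 0 ->
  ram_step Prog (Config pc R mem) = Config t R mem.
Proof. by rewrite /ram_step /= => -> ->. Qed.

Lemma step_nojump pc R mem x t : nth IHalt Prog pc = IJz x t -> R x <> 0 ->
  ram_step Prog (Config pc R mem) = Config pc.+1 R mem.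
Proof. by rewrite /ram_step /= => -> /eqP/negbTE ->. Qed.

#[local] Arguments iter : simpl never.

Ltac step := rewrite iterSr; first
  [ erewrite step_const by reflexivity | erewrite step_add by reflexivity
  | erewrite step_sub by reflexivity | erewrite step_load by reflexivity
  | erewrite step_store by reflexivity ]; rewrite /upd /=.
(* The jumps leave the test on the register as the first goal. *)
Ltac jump := rewrite iterSr; erewrite step_jump; [ | reflexivity | ]; last first;
  rewrite /upd /=.
Ltac nojump := rewrite iterSr; erewrite step_nojump; [ | reflexivity | ]; last first;
  rewrite /upd /=.
Ltac stop := match goal with |- context [iter 0 ?f ?x] => change (iter 0 f x) with x end.

Section Simulation.
Variables (Mm : nat -> nat) (p : nat).

Definition fixed_registers (R : nat -> nat) :=
  [/\ R 0 = 0, R 1 = 1, R 2 = p, R 3 = Mm 2 &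
   [/\ R 4 = Mm 3, R 5 = Mm 4, R 6 = Mm 4 + p, R 9 = 4 &
    [/\ R 10 = 2, R 11 = 3 & R 12 = 6]]].

Definition bucket_memory i (mem : nat -> nat) :=
  [/\ forall a, a < Mm 4 -> mem a = Mm a,
      forall j, j < p -> mem (Mm 4 + j) = 0 &
      forall a, a <= p -> mem (Mm 4 + p + a) = bucket_max Mm i a].

Definition bucket_loop i (s : config) :=
  [/\ cpc s = 16, fixed_registers (cregs s), cregs s 7 = i,
      cregs s 8 = Mm 2 + 4 * i & bucket_memory i (cmem s)].

Definition answer_memory j (mem : nat -> nat) :=
  [/\ forall a, a < Mm 4 -> mem a = Mm a,
      forall a, a <= p -> mem (Mm 4 + p + a) = bucket_max Mm p a &
      forall j', j' < p -> mem (Mm 4 + j') = (j' < j) && answer Mm p j'].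

Definition answer_loop j (s : config) :=
  [/\ cpc s = 36, fixed_registers (cregs s),
      [/\ cregs s 7 = j, cregs s 20 = Mm 3 + 6 * j & cregs s 19 = running_max Mm p j]
    & answer_memory j (cmem s)].

Definition layout_ok :=
  [/\ p = (Mm 0 + Mm 1).-1, Mm 2 + 4 * p <= Mm 4, Mm 3 + 6 * p <= Mm 4,
      forall a, Mm 4 <= a -> Mm a = 0 & forall k, k < p -> sigmaA_code Mm k <= p].

Hypothesis layout : layout_ok.

Lemma bucket_loop_step i s : i < p -> bucket_loop i s ->
  exists2 t, t <= 17 & bucket_loop i.+1 (iter t (ram_step Prog) s).
Proof.
case: s => pc R mem ip [] /= -> [r0 r1 r2 r3 [r4 r5 r6 r9 [r10 r11 r12]]] r7 r8 [m1 m2 m3].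
have [_ IN_below _ _ _] := layout.
have e3 : mem (Mm 2 + 4 * i + 3) = Mm (Mm 2 + 4 * i + 3) by apply: m1; lia.
have e1 : mem (Mm 2 + 4 * i + 1) = Mm (Mm 2 + 4 * i + 1) by apply: m1; lia.
have e2 : mem (Mm 2 + 4 * i + 2) = Mm (Mm 2 + 4 * i + 2) by apply: m1; lia.
have codeA_le : sigmaA_code Mm i <= p by case: layout => _ _ _ _; apply.
case reached: (input_reached Mm i).
- exists 17 => //.
  step. nojump. rewrite r2 r7; lia.
  step. step. nojump. rewrite r8 r11 e3; exact/eqP.
  do 11 step. jump. by rewrite r0. stop.
  split=> //=.
  + by rewrite r7 r1 addn1.
  + by rewrite r8 r9; lia.
  + rewrite r8 r6 r1 r10 e1 e2 -/(sigmaA_code Mm i) -/(sigmaZ_code Mm i); split.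
    * by move=> a ha; case: eqP => [e|_]; [lia | exact: m1].
    * by move=> j jp; case: eqP => [e|_]; [lia | exact: m2].
    * move=> a ap; rewrite bucket_maxS reached /= eqn_add2l.
      case: eqP => [<-|ne]; first by rewrite eqxx m3 // maxnE.
      by rewrite m3 //; case: eqP => // codeA; case: ne.
- exists 8 => //.
  step. nojump. rewrite r2 r7; lia.
  step. step. jump. by rewrite r8 r11 e3; move/negbFE/eqP: reached.
  step. step. jump. by rewrite r0. stop.
  split=> //=.
  + by rewrite r7 r1 addn1.
  + by rewrite r8 r9; lia.
  + by split=> // a ap; rewrite bucket_maxS reached m3.
Qed.

Lemma answer_loop_step j s : j < p -> answer_loop j s ->
  exists2 t, t <= 17 & answer_loop j.+1 (iter t (ram_step Prog) s).
Proof.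
case: s => pc R mem jp [] /= -> [r0 r1 r2 r3 [r4 r5 r6 r9 [r10 r11 r12]]] [r7 r20 r19] [m1 m3 m2].
have [_ _ OUT_below _ _] := layout.
have bucket : mem (Mm 4 + p + j + 1) = bucket_max Mm p j.+1 by rewrite -addnA addn1 m3.
have running : running_max Mm p j + (bucket_max Mm p j.+1 - running_max Mm p j) =
  running_max Mm p j.+1 by rewrite running_maxS maxnE.
have flag : mem (Mm 3 + 6 * j + 1) = Mm (Mm 3 + 6 * j + 1) by apply: m1; lia.
have [covered|uncovered] := leqP (running_max Mm p j.+1) j.
- exists 12 => //.
  step. nojump. rewrite r2 r7; lia.
  do 6 step. jump. rewrite r6 r7 r1 bucket r19 running; lia.
  step. step. jump. by rewrite r0. stop.
  split=> //=.
  + by rewrite r7 r20 r1 r12 r6 bucket r19 running; split=> //; lia.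
  + split=> // j' j'p; rewrite m2 // [in RHS]ltnS [in RHS]leq_eqVlt.
    by case: eqP => [->|_] //; rewrite ltnn /answer ltnNge covered andbF.
- case flag0: (Mm (Mm 3 + 6 * j + 1) == 0).
  + exists 15 => //.
    step. nojump. rewrite r2 r7; lia.
    do 6 step. nojump. rewrite r6 r7 r1 bucket r19 running; lia.
    step. step. jump. by rewrite r20 r1 flag; exact/eqP.
    step. step. jump. by rewrite r0. stop.
    split=> //=.
    * by rewrite r7 r20 r1 r12 r6 bucket r19 running; split=> //; lia.
    * split=> // j' j'p; rewrite m2 // [in RHS]ltnS [in RHS]leq_eqVlt.
      by case: eqP => [->|_] //; rewrite ltnn /answer flag0.
  + exists 17 => //.
    step. nojump. rewrite r2 r7; lia.
    do 6 step. nojump. rewrite r6 r7 r1 bucket r19 running; lia.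
    step. step. nojump. by rewrite r20 r1 flag => e; rewrite e in flag0.
    do 4 step. jump. by rewrite r0. stop.
    split=> //=.
    * by rewrite r7 r20 r1 r12 r6 bucket r19 running; split=> //; lia.
    * rewrite r5 r7 r1; split.
      - by move=> a ha; case: eqP => [e|_]; [lia | exact: m1].
      - by move=> a ha; case: eqP => [e|_]; [lia | exact: m3].
      - move=> j' j'p; rewrite eqn_add2l ltnS leq_eqVlt.
        case: eqP => [->|_]; first by rewrite /answer flag0 uncovered.
        by rewrite m2.
Qed.

Lemma prologue : bucket_loop 0 (iter 16 (ram_step Prog) (init Mm)).
Proof.
have [p_def _ _ FREE_zero _] := layout.
rewrite /init; do 16 step; stop; split=> //=.
- by rewrite /fixed_registers /= p_def subn1.
- split=> // [j jp | a ap]; first by apply: FREE_zero; lia.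
  by rewrite bucket_max0 FREE_zero //; lia.
Qed.

Lemma between_loops s : bucket_loop p s -> answer_loop 0 (iter 5 (ram_step Prog) s).
Proof.
case: s => pc R mem [] /= -> [r0 r1 r2 r3 [r4 r5 r6 r9 [r10 r11 r12]]] r7 r8 [m1 m2 m3].
step. jump. by rewrite r2 r7 subnn.
do 3 step; stop; split=> //=.
by rewrite r4 r0 muln0 addn0 running_max0.
Qed.

Lemma epilogue s : answer_loop p s ->
  halted Prog (iter 2 (ram_step Prog) s) /\ answer_memory p (cmem (iter 2 (ram_step Prog) s)).
Proof.
case: s => pc R mem [] /= -> [r0 r1 r2 r3 _] [r7 _ _] mem_ok.
by step; jump; [rewrite r2 r7 subnn | stop].
Qed.

End Simulation.

Lemma Prog_correct Mm p : layout_ok Mm p ->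
  exists t, [/\ t <= 34 * p + 23, halted Prog (iter t (ram_step Prog) (init Mm)) &
    forall j, j < p -> cmem (iter t (ram_step Prog) (init Mm)) (Mm 4 + j) = answer Mm p j].
Proof.
move=> layout.
have [t1 le_t1 bucket_done] := iter_invariant (bucket_loop_step layout) (prologue layout).
have [t2 le_t2 answer_done] := iter_invariant (answer_loop_step layout)
  (between_loops bucket_done).
have [halts [_ _ answers]] := epilogue answer_done.
exists (2 + (t2 + (5 + (t1 + 16)))); rewrite !iterD; split=> //; first lia.
by move=> j jp; rewrite answers // jp.
Qed.

Lemma encb_bool (b : bool) P : (b <-> P) -> encb b P.
Proof. by case: b => -[bP Pb]; [left; split=> //; apply: bP | right; split=> // /Pb]. Qed.

Lemma encodes_layout m n (M : 'M[bool]_(m, n)) rm rp sm sp Mm :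
  encodes M rm rp sm sp Mm -> layout_ok Mm (blen rm rp sm sp).
Proof.
case=> [[rows cols] [IN_below OUT_below] FREE_zero hin _]; split=> //.
  by rewrite /blen rows cols.
move=> k kp; have [_ hA _ _] := hin k kp.
by rewrite /sigmaA_code; case: hA => [[j -> [jp _ _]] | [-> _]].
Qed.

Theorem lemma1 :
  exists (P : program) (C : nat),
  forall (m n : nat) (M : 'M[bool]_(m, n)) (rm rp sm sp : nat),
    rm <= rp -> rp < m -> sm <= sp -> sp < n ->
  forall Mm : nat -> nat,
    encodes M rm rp sm sp Mm ->
  exists t : nat,
    [/\ t <= C * (brows rm rp + bcols sm sp),
        halted P (iter t (ram_step P) (init Mm)) &
        output_ok M rm rp sm sp (Mm 4) (cmem (iter t (ram_step P) (init Mm)))].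
Proof.
exists Prog, 34 => m n M rm rp sm sp hr _ hs _ Mm enc.
have [t [t_le halts answers]] := Prog_correct (encodes_layout enc).
exists t; split=> //; first by move: t_le; rewrite /blen /brows /bcols; lia.
by move=> j jp; rewrite answers //; apply/encb_bool/answer_iff.
Qed.
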